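(* Let $F$ be a finite-precision CDF and $S$ a finite-precision survival function over a binary number format $\mathcal{B}=(n,\gamma_{\mathcal{B}},\phi_{\mathcal{B}})$, with values in $\mathbb{F}^E_m\cap[0,1]$. Let $b^*:=\min_{<_{\mathcal{B}}}\{b\in\{0,1\}^n:F(b)\ge\mathrm{succ}(1/2)\}$ with $\mathrm{succ}(1/2)$ the smallest element of $\mathbb{F}^E_m$ greater than $1/2$, suppose $S(b^* )<1/2$, and define $G(b):=(0,F(b))$ if $b<_{\mathcal{B}}b^*$ and $G(b):=(1,S(b))$ if $b\ge_{\mathcal{B}}b^*$; let $G^*(b):=(1-d)f+d(1-f)$ for $(d,f)=G(b)$. Then: (i) there is a random variable $X$ with values in $\overline{\mathbb{R}}_{\mathcal{B}}:=\gamma_{\mathcal{B}}(\{0,1\}^n)$ such that $\Pr(X\le t)=(1-d)f+d(1-f)$ for every $t\in\overline{\mathbb{R}}_{\mathcal{B}}$, where $(d,f)=G(r(t))$ and $r(t):=\max_{<_{\mathcal{B}}}\{b\in\{0,1\}^n:\gamma_{\mathcal{B}}(b)\le t\}$; (ii) the image of $G$ is contained in $\{(0,f):0\le f\le1/2\}\cup\{(1,f):0\le f<1/2\}$; (iii) for all $b,b'\in\{0,1\}^n$, if the first component of $G(b)$ is less than the first component of $G(b')$, then $G^*(b)<G^*(b')$.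
   Context: $\overline{\mathbb{R}}=\mathbb{R}\cup\{-\infty,+\infty,\bot\}$ is totally ordered by $-\infty<$ reals $<+\infty<\bot$, with $\le$ the corresponding weak order. A binary number format $\mathcal{B}=(n,\gamma_{\mathcal{B}},\phi_{\mathcal{B}})$ consists of $n\ge1$, $\gamma_{\mathcal{B}}:\{0,1\}^n\to\overline{\mathbb{R}}$, and a bijection $\phi_{\mathcal{B}}$ of $\{0,1\}^n$ with $b<_{\mathrm{dict}}b'\Rightarrow\gamma_{\mathcal{B}}(\phi_{\mathcal{B}}(b))\le\gamma_{\mathcal{B}}(\phi_{\mathcal{B}}(b'))$; it induces the linear order $b<_{\mathcal{B}}b'$ iff $\phi_{\mathcal{B}}^{-1}(b)<_{\mathrm{dict}}\phi_{\mathcal{B}}^{-1}(b')$. $\mathbb{F}^E_m$ is the set of floating-point numbers with $E$ exponent and $m$ mantissa bits. A finite-precision CDF over $\mathcal{B}$ is $F:\{0,1\}^n\to\mathbb{F}^E_m\cap[0,1]$ with $F(\phi_{\mathcal{B}}(1^n))=1$ and $b<_{\mathcal{B}}b'\Rightarrow F(b)\le F(b')$. A finite-precision survival function over $\mathcal{B}$ is $S:\{0,1\}^n\to\mathbb{F}^E_m\cap[0,1]$ with $S(\phi_{\mathcal{B}}(1^n))=0$ and $b<_{\mathcal{B}}b'\Rightarrow S(b')\le S(b)$. *)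

From HB Require Import structures.
From mathcomp Require Import all_boot all_order all_algebra.
From mathcomp Require Import all_classical all_reals all_analysis.
Set Implicit Arguments.
Unset Strict Implicit.
Unset Printing Implicit Defensive.
Import Order.TTheory GRing.Theory Num.Theory.
Local Open Scope ring_scope.

(** Extended reals  R ∪ {-oo, +oo, ⊥}, totally ordered by
    -oo < reals < +oo < ⊥. *)
Inductive xreal (R : realType) : Type :=
  | XReal of R
  | XNinf
  | XPinf
  | XBot.
Arguments XNinf {R}. Arguments XPinf {R}. Arguments XBot {R}.

Definition xrank (R : realType) (x : xreal R) : nat :=
  match x with XNinf => 0 | XReal _ => 1 | XPinf => 2 | XBot => 3 end.

Definition xle (R : realType) (x y : xreal R) : bool :=
  match x, y with
  | XReal a, XReal b => a <= b
  | _, _ => (xrank x <= xrank y)%N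
  end.

Fixpoint lex_lt (s t : seq bool) : bool :=
  match s, t with
  | x :: s', y :: t' => (~~ x && y) || ((x == y) && lex_lt s' t')
  | _, _ => false
  end.

Definition dict_lt (n : nat) (b b' : n.-tuple bool) : bool := lex_lt b b'.

Record binformat (R : realType) (n : nat) := BinFormat {
  bf_gamma : n.-tuple bool -> xreal R;
  bf_phi : n.-tuple bool -> n.-tuple bool;
  bf_phi_inv : n.-tuple bool -> n.-tuple bool;
  bf_phiK : cancel bf_phi bf_phi_inv;
  bf_phi_invK : cancel bf_phi_inv bf_phi;
  bf_mono : forall b b' : n.-tuple bool, dict_lt b b' ->
     xle (bf_gamma (bf_phi b)) (bf_gamma (bf_phi b'))
}.

Definition bltB (R : realType) (n : nat) (B : binformat R n) (b b' : n.-tuple bool) : bool :=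
  dict_lt (bf_phi_inv B b) (bf_phi_inv B b').
Definition bleB (R : realType) (n : nat) (B : binformat R n) (b b' : n.-tuple bool) : bool :=
  (b == b') || bltB B b b'.

Definition ones (n : nat) : n.-tuple bool := [tuple of nseq n true].

(** The floating-point numbers F^E_m (IEEE-754 style binary format with
    E exponent bits and m mantissa bits, bias 2^(E-1)-1; the all-ones
    exponent field encodes infinities / NaN and contributes no real value;
    subnormals for exponent field 0).  Only the real-valued elements are
    described, which is all that matters inside [0,1]. *)
Definition is_float (R : realType) (E m : nat) (x : R) : Prop :=
  exists (s : bool) (e k : nat),
    [/\ (e < 2 ^ E - 1)%N, (k < 2 ^ m)%N &
      x = (-1) ^+ s *
          (if e == 0%N
           then (k%:R / (2 ^ m)%:R) * (2 : R) ^ (1 - (2 ^ E.-1 - 1)%:Z)%R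
           else (1 + k%:R / (2 ^ m)%:R) * (2 : R) ^ (e%:Z - (2 ^ E.-1 - 1)%:Z)%R)].

Definition is_fp_cdf (R : realType) (n E m : nat) (B : binformat R n)
    (F : n.-tuple bool -> R) : Prop :=
  [/\ forall b, is_float E m (F b) /\ 0 <= F b <= 1,
      F (bf_phi B (ones n)) = 1 &
      forall b b', bltB B b b' -> F b <= F b'].

Definition is_fp_survival (R : realType) (n E m : nat) (B : binformat R n)
    (S : n.-tuple bool -> R) : Prop :=
  [/\ forall b, is_float E m (S b) /\ 0 <= S b <= 1,
      S (bf_phi B (ones n)) = 0 &
      forall b b', bltB B b b' -> S b' <= S b].

Definition Gfun (R : realType) (n : nat) (B : binformat R n)
    (F S : n.-tuple bool -> R) (bstar : n.-tuple bool) (b : n.-tuple bool) : R * R :=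
  if bltB B b bstar then (0, F b) else (1, S b).

Definition Gstar (R : realType) (n : nat) (B : binformat R n)
    (F S : n.-tuple bool -> R) (bstar : n.-tuple bool) (b : n.-tuple bool) : R :=
  let: (d, f) := Gfun B F S bstar b in (1 - d) * f + d * (1 - f).

From HB Require Import structures.
From mathcomp Require Import all_boot all_order all_algebra.
From mathcomp Require Import all_classical all_reals all_analysis.
From mathcomp Require Import lra.
Import Order.TTheory GRing.Theory Num.Theory.
Local Open Scope ring_scope.
Local Open Scope classical_set_scope.
Set Implicit Arguments.
Unset Strict Implicit.

(* Below bstar, F stays under succ(1/2) and takes float values, so F <= 1/2;
   from bstar on, S <= S(bstar) < 1/2, so 1 - S > 1/2.  Hence G* is
   nondecreasing along <_B, jumps strictly across bstar, and equals
   1 - S(top) = 1 at the top of the format: it is a CDF on the finite chain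
   ({0,1}^n, <_B).  The discrete law with these increments, placed on the
   sorted enumeration of {0,1}^n, gives the random variable of (i). *)

Lemma lex_lt_irr (s : seq bool) : lex_lt s s = false.
Proof. by elim: s => //= x s ->; rewrite eqxx andbF andNb. Qed.

Lemma lex_lt_trans (s t u : seq bool) : lex_lt s t -> lex_lt t u -> lex_lt s u.
Proof.
elim: s t u => [|x s IH] [|y t] [|z u] //=.
by case: x; case: y; case: z => //=; apply: IH.
Qed.

Lemma lex_lt_total (s t : seq bool) :
  size s = size t -> s <> t -> lex_lt s t || lex_lt t s.
Proof.
elim: s t => [|x s IH] [|y t] //= [] st neq.
by case: x neq; case: y => //= neq; apply: IH => // e; apply: neq; rewrite e.
Qed.

Lemma lex_lt_nseq_true (s : seq bool) : lex_lt (nseq (size s) true) s = false.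
Proof. by elim: s => //= x s ->; case: x. Qed.

Lemma xle_refl (R : realType) (x : xreal R) : xle x x.
Proof. by case: x => //= r; rewrite lexx. Qed.

Lemma xle_trans (R : realType) (x y z : xreal R) : xle x y -> xle y z -> xle x z.
Proof. by case: x; case: y; case: z => //= a b c; apply: le_trans. Qed.

Lemma sorted_uniq_leq_nth (T : eqType) (leT : rel T) (x0 : T) (s : seq T) :
    reflexive leT -> transitive leT -> antisymmetric leT ->
    sorted leT s -> uniq s ->
  {in [pred k | (k < size s)%N] &,
    {mono nth x0 s : i j / (i <= j)%N >-> leT i j}}.
Proof.
move=> leT_refl leT_tr leT_anti s_sorted s_uniq i j si sj.
have homo := sorted_leq_nth leT_tr leT_refl x0 s_sorted.
apply/idP/idP => [le_ij|]; last exact: homo.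
rewrite leqNgt; apply/negP => lt_ji.
have /eqP := leT_anti _ _ (introT andP (conj le_ij (homo _ _ sj si (ltnW lt_ji)))).
by rewrite nth_uniq // => /eqP eq_ij; rewrite eq_ij ltnn in lt_ji.
Qed.

Section BinFormatOrder.
Variables (R : realType) (n : nat) (B : binformat R n).
Implicit Types b c d : n.-tuple bool.

Lemma bltB_irr b : bltB B b b = false.
Proof. exact: lex_lt_irr. Qed.

Lemma bltB_trans b c d : bltB B b c -> bltB B c d -> bltB B b d.
Proof. exact: lex_lt_trans. Qed.

Lemma bltB_total b c : b <> c -> bltB B b c || bltB B c b.
Proof.
move=> ne; apply: lex_lt_total; first by rewrite !size_tuple.
by move=> /val_inj /(can_inj (@bf_phi_invK _ _ B)).
Qed.

Lemma bltB_onesF b : bltB B (bf_phi B (ones n)) b = false.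
Proof.
rewrite /bltB /dict_lt bf_phiK /=.
by have := lex_lt_nseq_true (bf_phi_inv B b); rewrite size_tuple.
Qed.

Lemma bleB_refl : reflexive (bleB B).
Proof. by move=> b; rewrite /bleB eqxx. Qed.

Lemma bleB_trans : transitive (bleB B).
Proof.
move=> c b d; rewrite /bleB => /orP[/eqP->//|lt_bc] /orP[/eqP<-|lt_cd].
  by rewrite lt_bc orbT.
by rewrite (bltB_trans lt_bc lt_cd) orbT.
Qed.

Lemma bleB_total : total (bleB B).
Proof.
move=> b c; rewrite /bleB; have [->|ne] := eqVneq b c; first by [].
by case/orP: (bltB_total (elimN eqP ne)) => ->; rewrite ?orbT.
Qed.

Lemma bleB_ltF b c : bleB B b c -> bltB B c b = false.
Proof.
rewrite /bleB => /orP[/eqP->|lt_bc]; first exact: bltB_irr.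
by apply/negP => /(bltB_trans lt_bc); rewrite bltB_irr.
Qed.

Lemma bleB_anti : antisymmetric (bleB B).
Proof.
move=> b c /andP[le_bc]; rewrite /bleB => /orP[/eqP->//|lt_cb].
by rewrite bleB_ltF in lt_cb.
Qed.

Lemma bleB_ones b : bleB B b (bf_phi B (ones n)).
Proof.
have := bleB_total b (bf_phi B (ones n)); rewrite {2}/bleB bltB_onesF orbF.
by case/orP=> [//|/eqP->]; apply: bleB_refl.
Qed.

Lemma bleB_xle_gamma b c : bleB B b c -> xle (bf_gamma B b) (bf_gamma B c).
Proof.
rewrite /bleB => /orP[/eqP->|lt_bc]; first exact: xle_refl.
by have := bf_mono B lt_bc; rewrite !bf_phi_invK.
Qed.

Definition enumB : seq (n.-tuple bool) := sort (bleB B) (enum {: n.-tuple bool}).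

Lemma mem_enumB b : b \in enumB.
Proof. by rewrite mem_sort mem_enum. Qed.

Lemma enumB_leq_nth x0 :
  {in [pred k | (k < size enumB)%N] &,
    {mono nth x0 enumB : i j / (i <= j)%N >-> bleB B i j}}.
Proof.
apply: sorted_uniq_leq_nth bleB_refl bleB_trans bleB_anti _ _.
  exact: (sort_sorted bleB_total).
by rewrite sort_uniq enum_uniq.
Qed.

Lemma size_enumB_gt0 : (0 < size enumB)%N.
Proof.
by rewrite lt0n size_eq0; apply/eqP => e0; have := mem_enumB (ones n); rewrite e0.
Qed.

Lemma nth_last_enumB x0 : nth x0 enumB (size enumB).-1 = bf_phi B (ones n).
Proof.
have top_in := mem_enumB (bf_phi B (ones n)).
have last_lt : ((size enumB).-1 < size enumB)%N by rewrite prednK ?size_enumB_gt0.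
apply: bleB_anti; rewrite bleB_ones /= -{1}(nth_index x0 top_in).
by rewrite enumB_leq_nth ?inE ?index_mem // -ltnS prednK ?size_enumB_gt0 ?index_mem.
Qed.

End BinFormatOrder.

Section DiscreteCdf.
Variables (R : realType) (N : nat) (g : nat -> R).
Hypotheses (N_gt0 : (0 < N)%N) (g0_ge0 : 0 <= g 0%N)
  (g_incr : forall k, (k.+1 < N)%N -> g k <= g k.+1) (g_last : g N.-1 = 1).

(* [cdf0 k] is the CDF strictly below [k], so [mass k] is the jump at [k]. *)
Let cdf0 k := if k is k'.+1 then g k' else 0.
Let mass k := if (k < N)%N then cdf0 k.+1 - cdf0 k else 0.

Let mass_ge0 k : 0 <= mass k.
Proof.
rewrite /mass; case: ifP => // kN; rewrite subr_ge0.
by case: k kN => [|k] kN //; apply: g_incr.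
Qed.

Let sum_mass_leq r : (r < N)%N -> \sum_(k < N) mass k * (k <= r)%N%:R = g r.
Proof.
move=> rN; rewrite -(big_mkord xpredT (fun k => mass k * (k <= r)%N%:R)).
rewrite (big_cat_nat _ (n := r.+1)) //=.
rewrite [X in _ + X]big1_seq ?addr0 => [|k]; last first.
  by rewrite mem_index_iota => /andP[_ /andP[rk _]]; rewrite leqNgt rk mulr0.
rewrite -[g r]subr0 -[0]/(cdf0 0) -[g r]/(cdf0 r.+1) -telescope_sumr //.
apply: eq_big_nat => k /andP[_]; rewrite ltnS => kr.
by rewrite kr mulr1 /mass (leq_ltn_trans kr rN).
Qed.

Let mu := msum (fun k => mscale (NngNum (mass_ge0 k)) \d_k) N.

Let muE U : mu U = (\sum_(k < N) mass k * ((k : nat) \in U)%:R)%:E.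
Proof.
rewrite /mu /msum /=; under eq_bigr do rewrite /mscale /dirac /indic -EFinM.
by rewrite sumEFin.
Qed.

Let mu_initial_segment U r : (r < N)%N ->
  (forall k, (k < N)%N -> (k \in U) = (k <= r)%N) -> mu U = (g r)%:E.
Proof.
move=> rN hU; rewrite muE -sum_mass_leq //.
by congr EFin; apply: eq_bigr => k _; rewrite hU.
Qed.

Lemma discrete_cdf_probability : exists P : probability nat R,
  forall (U : set nat) r, (r < N)%N ->
    (forall k, (k < N)%N -> (k \in U) = (k <= r)%N) -> P U = (g r)%:E.
Proof.
have mu1 : mu setT = 1%:E.
  by rewrite -g_last; apply: mu_initial_segment => [|k kN];
    rewrite ?prednK // in_setT -ltnS prednK.
exists (mnormalize mu \d_0%N) => U r rN hU.
rewrite /= /mnormalize /= -/mu mu1 /= onee_eq0 /= invr1 mule1.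
exact: mu_initial_segment.
Qed.

End DiscreteCdf.

Section GfunProperties.
Variables (R : realType) (n E m : nat) (B : binformat R n) (F S : n.-tuple bool -> R).
Hypotheses (hF : is_fp_cdf E m B F) (hS : is_fp_survival E m B S).
Variables (s : R) (bstar : n.-tuple bool).
Hypotheses (hs_min : forall x : R, is_float E m x -> 2^-1 < x -> s <= x)
  (hbstar_min : forall b, s <= F b -> bleB B bstar b) (hSbstar : S bstar < 2^-1).
Implicit Types b c : n.-tuple bool.

Local Notation G := (Gfun B F S bstar).
Local Notation Gs := (Gstar B F S bstar).

Lemma GstarE b : Gs b = if bltB B b bstar then F b else 1 - S b.
Proof.
rewrite /Gstar /Gfun; case: ifP => _; first by rewrite subr0 mul1r mul0r addr0.
by rewrite subrr mul0r add0r mul1r.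
Qed.

Lemma F_le_half b : bltB B b bstar -> F b <= 2^-1.
Proof.
case: hF => F_float _ _ lt_b_bstar.
have F_lt_s : F b < s.
  by rewrite ltNge; apply/negP => /hbstar_min /bleB_ltF; rewrite lt_b_bstar.
rewrite leNgt; apply/negP => /(hs_min (proj1 (F_float b))).
by rewrite leNgt F_lt_s.
Qed.

Lemma S_lt_half b : ~~ bltB B b bstar -> S b < 2^-1.
Proof.
case: hS => _ _ S_nonincr b_ge; apply: le_lt_trans hSbstar.
have [->|ne] := eqVneq b bstar; first by [].
by case/orP: (bltB_total B (elimN eqP ne)) => [lt_b|/S_nonincr //]; rewrite lt_b in b_ge.
Qed.

Lemma Gstar_lt_across b c :
  bltB B b bstar -> ~~ bltB B c bstar -> Gs b < Gs c.
Proof.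
move=> lt_b ge_c; rewrite !GstarE lt_b (negbTE ge_c).
by have := F_le_half lt_b; have := S_lt_half ge_c; lra.
Qed.

Lemma Gstar_homo b c : bleB B b c -> Gs b <= Gs c.
Proof.
case: hF hS => _ _ F_homo [_ _ S_nonincr].
case/orP => [/eqP->//|lt_bc].
case lt_b: (bltB B b bstar); case lt_c: (bltB B c bstar).
- by rewrite !GstarE lt_b lt_c F_homo.
- by rewrite ltW // Gstar_lt_across // lt_c.
- by rewrite (bltB_trans lt_bc lt_c) in lt_b.
- by rewrite !GstarE lt_b lt_c lerD2l lerN2 S_nonincr.
Qed.

Lemma Gstar_ge0 b : 0 <= Gs b.
Proof.
case: hF hS => F01 _ _ [S01 _ _]; rewrite GstarE; case: ifP => _.
  by case: (F01 b) => _ /andP[].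
by case: (S01 b) => _ /andP[_]; rewrite subr_ge0.
Qed.

Lemma Gstar_ones : Gs (bf_phi B (ones n)) = 1.
Proof. by case: hS => _ S_top _; rewrite GstarE bltB_onesF S_top subr0. Qed.

Lemma Gfun_range b : let: (d, f) := G b in
  (d = 0 /\ 0 <= f <= 2^-1) \/ (d = 1 /\ 0 <= f < 2^-1).
Proof.
case: hF hS => F01 _ _ [S01 _ _]; rewrite /Gfun; case: ifPn => b_bstar.
  by left; split=> //; case: (F01 b) => _ /andP[-> _]; rewrite F_le_half.
by right; split=> //; case: (S01 b) => _ /andP[-> _]; rewrite S_lt_half.
Qed.

Lemma Gstar_lt_of_Gfun_lt b c : (G b).1 < (G c).1 -> Gs b < Gs c.
Proof.
rewrite /Gfun; case: ifP => lt_b; case: ifP => lt_c /=; rewrite ?ltxx ?ltr10 // => _.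
by rewrite Gstar_lt_across // lt_c.
Qed.

Lemma Gstar_distribution :
  exists (d : measure_display) (T : measurableType d)
         (P : probability T R) (X : T -> xreal R),
    [/\ forall w, exists b, X w = bf_gamma B b,
        forall A : set (xreal R), measurable (X @^-1` A) &
        forall (t : xreal R) (rt : n.-tuple bool),
          xle (bf_gamma B rt) t ->
          (forall b, xle (bf_gamma B b) t -> bleB B b rt) ->
          P [set w | xle (X w) t] = (Gs rt)%:E].
Proof.
set e := enumB B; pose g k := Gs (nth bstar e k).
have [P PE] : exists P : probability nat R, forall U r, (r < size e)%N ->
    (forall k, (k < size e)%N -> (k \in U) = (k <= r)%N) -> P U = (g r)%:E.
  apply: discrete_cdf_probability.
  - exact: size_enumB_gt0.
  - exact: Gstar_ge0.
  - by move=> k k_lt; apply: Gstar_homo; rewrite enumB_leq_nth ?inE ?leqnSn // ltnW.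
  - by rewrite /g /e nth_last_enumB Gstar_ones.
exists default_measure_display, nat, P, (fun k => bf_gamma B (nth bstar e k)).
split=> [k|//|t rt rt_le rt_max]; first by exists (nth bstar e k).
have rt_in : (index rt e < size e)%N by rewrite index_mem mem_enumB.
rewrite (PE _ (index rt e)) /g ?nth_index ?mem_enumB // => k k_lt.
rewrite -(enumB_leq_nth (B := B) bstar) ?inE // nth_index ?mem_enumB //.
apply/idP/idP => [/set_mem /rt_max //|le_k_rt].
by apply/mem_set; apply: xle_trans rt_le; apply: bleB_xle_gamma.
Qed.

End GfunProperties.

Theorem propositionE2 (R : realType) (n E m : nat) (hn : (0 < n)%N)
    (B : binformat R n) (F S : n.-tuple bool -> R)
    (hF : is_fp_cdf E m B F) (hS : is_fp_survival E m B S)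
    (* s = succ(1/2): the smallest element of F^E_m greater than 1/2 *)
    (s : R) (hs_fl : is_float E m s) (hs_gt : 2^-1 < s)
    (hs_min : forall x : R, is_float E m x -> 2^-1 < x -> s <= x)
    (* bstar = min_{<_B} { b | F b >= succ(1/2) } *)
    (bstar : n.-tuple bool) (hbstar : s <= F bstar)
    (hbstar_min : forall b, s <= F b -> bleB B bstar b)
    (hSbstar : S bstar < 2^-1) :
  (* (i) *)
  (exists (d : measure_display) (T : measurableType d)
          (P : probability T R) (X : T -> xreal R),
     [/\ forall w, exists b, X w = bf_gamma B b,
         forall A : set (xreal R), measurable (X @^-1` A) &
         forall (t : xreal R), (exists b, bf_gamma B b = t) ->
         forall rt : n.-tuple bool,
           xle (bf_gamma B rt) t ->
           (forall b, xle (bf_gamma B b) t -> bleB B b rt) ->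
           P [set w | xle (X w) t] = (Gstar B F S bstar rt)%:E]) /\
  (* (ii) *)
  (forall b, let: (d, f) := Gfun B F S bstar b in
     (d = 0 /\ 0 <= f <= 2^-1) \/ (d = 1 /\ 0 <= f < 2^-1)) /\
  (* (iii) *)
  (forall b b', (Gfun B F S bstar b).1 < (Gfun B F S bstar b').1 ->
     Gstar B F S bstar b < Gstar B F S bstar b').
Proof.
have [d [T [P [X [X_range X_meas X_cdf]]]]] :=
  Gstar_distribution hF hS hs_min hbstar_min hSbstar.
split; last split.
- by exists d, T, P, X; split=> // t _; apply: X_cdf.
- exact: (Gfun_range hF hS hs_min hbstar_min hSbstar).
- exact: (Gstar_lt_of_Gfun_lt hF hS hs_min hbstar_min hSbstar).
Qed.
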